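(* Let $K$ be a field and $R$ a von Neumann regular, right self-injective $K$-algebra possessing a bounded basis. Then $R$ is completely reducible (semisimple).
   Context: Let $B$ be a $K$-linear basis of a $K$-algebra $R$. For $r\in R$ write $r=\sum_{b\in B}bk_b$, $\mathrm{supp}(r)=\{b\mid k_b\neq0\}$, $\mathrm{cs}(r)=|\mathrm{supp}(r)|$. $B$ is $k$-bounded ($1\le k<\omega$) if $\mathrm{cs}(bb')\le k$ for all $b,b'\in B$, and $B$ is bounded if it is $k$-bounded for some $1\le k<\omega$. *)

From HB Require Import structures.
From mathcomp Require Import all_boot all_order all_algebra.
Set Implicit Arguments. Unset Strict Implicit. Unset Printing Implicit Defensive.
Import GRing.Theory.
Local Open Scope ring_scope.

Section Defs.
Variables (K : fieldType) (R : algType K).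

Definition lin_indep (B : R -> Prop) : Prop :=
  forall (s : seq R) (c : R -> K), uniq s -> (forall b, b \in s -> B b) ->
    \sum_(b <- s) c b *: b = 0 -> forall b, b \in s -> c b = 0.

Definition spanning (B : R -> Prop) : Prop :=
  forall r : R, exists (s : seq R) (c : R -> K),
    (forall b, b \in s -> B b) /\ r = \sum_(b <- s) c b *: b.

Definition is_basis (B : R -> Prop) : Prop := lin_indep B /\ spanning B.

(* [supp_of B r s]: s (duplicate-free) enumerates supp(r) w.r.t. B, i.e.
   r = sum_{b in s} b k_b with all k_b <> 0. By linear independence, such s is
   unique up to permutation, and cs(r) = size s. *)
Definition supp_of (B : R -> Prop) (r : R) (s : seq R) : Prop :=
  uniq s /\ (forall b, b \in s -> B b) /\
  exists c : R -> K, (forall b, b \in s -> c b != 0) /\ r = \sum_(b <- s) c b *: b.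

Definition cs_le (B : R -> Prop) (r : R) (k : nat) : Prop :=
  forall s, supp_of B r s -> (size s <= k)%N.

Definition k_bounded (B : R -> Prop) (k : nat) : Prop :=
  (1 <= k)%N /\ forall b b', B b -> B b' -> cs_le B (b * b') k.

Definition bounded_basis (B : R -> Prop) : Prop :=
  is_basis B /\ exists k : nat, k_bounded B k.

End Defs.

Section Ring.
Variable R : nzRingType.

Definition vN_regular : Prop := forall a : R, exists x : R, a * x * a = a.

(* Right R-modules are left modules over the opposite ring R^c; the right
   regular module R_R is (R^c)^o, where  a *: x = x * a. *)
Definition right_self_injective : Prop :=
  forall (M N : lmodType R^c) (f : {linear M -> N}), injective f ->
  forall g : {linear M -> (R^c)^o},
  exists h : {linear N -> (R^c)^o}, forall m, h (f m) = g m.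

Definition right_ideal (I : R -> Prop) : Prop :=
  I 0 /\ (forall x y, I x -> I y -> I (x - y)) /\
  (forall x r, I x -> I (x * r)).

Definition completely_reducible : Prop :=
  forall I, right_ideal I -> exists J, right_ideal J /\
    (forall x, I x -> J x -> x = 0) /\
    (forall r, exists i j, I i /\ J j /\ r = i + j).
End Ring.

(* If R is not semisimple, von Neumann regularity produces nonzero orthogonal
   idempotents h_0, h_1, ...  Split them into infinitely many infinite blocks.
   Self-injectivity, together with the nonsingularity of regular rings, gives
   orthogonal idempotents a_i with a_i h_j = h_j on the i-th block and 0 off
   it.  The left ideal R a_i contains the independent elements h_j a_i, so it
   contains some z_i with cs z_i > k i cs a_i.  Self-injectivity once more
   gives y with y a_i = z_i for all i, whereas a k-bounded basis forces
   cs (y a_i) <= k cs y cs a_i: take i = cs y. *)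

From HB Require Import structures.
From mathcomp Require Import all_boot all_order all_algebra zify.
From mathcomp Require Import boolp.
From mathcomp Require classical_sets.
Set Implicit Arguments. Unset Strict Implicit. Unset Printing Implicit Defensive.
Import GRing.Theory.
Local Open Scope ring_scope.

Section RightIdeals.
Variable R : nzRingType.

Definition direct_summand (I : R -> Prop) : Prop :=
  exists J, right_ideal J /\ (forall x, I x -> J x -> x = 0) /\
    (forall r, exists i j, I i /\ J j /\ r = i + j).

Definition orthogonal_idempotents (e : nat -> R) : Prop :=
  forall i j, e i * e j = if i == j then e i else 0.

Definition essential (E : R -> Prop) : Prop :=
  forall x, x != 0 -> exists r, x * r != 0 /\ E (x * r).

Lemma right_idealD (I : R -> Prop) x y : right_ideal I -> I x -> I y -> I (x + y).
Proof.
move=> [I0 [IB _]] Ix Iy; have := IB _ _ Ix (IB _ _ I0 Iy).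
by rewrite sub0r opprK.
Qed.

Lemma orthogonal_increments (E h : nat -> R) :
  (forall n, h n * h n = h n) ->
  (forall n, E n * h n = 0 /\ h n * E n = 0) ->
  E 0 = 0 -> (forall n, E n.+1 = E n + h n) ->
  orthogonal_idempotents h.
Proof.
move=> hid Eh E0 ES.
have absorb n m : (n < m)%N -> E m * h n = h n /\ h n * E m = h n.
  elim: m => [|m IH] //; rewrite ltnS leq_eqVlt ES => /orP[/eqP <-|lt].
    by rewrite mulrDl mulrDr (Eh n).1 (Eh n).2 (hid n) !add0r.
  have [Emn hnE] := IH lt; have [Emm hmE] := Eh m.
  have hmn : h m * h n = 0 by rewrite -Emn mulrA hmE mul0r.
  have hnm : h n * h m = 0 by rewrite -hnE -mulrA Emm mulr0.
  by rewrite mulrDl mulrDr Emn hnE hmn hnm !addr0.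
move=> n m; case: ltngtP => [lt|lt|->]; last exact: hid m.
  by rewrite -(absorb n m lt).2 -mulrA (Eh m).1 mulr0.
by rewrite -(absorb m n lt).1 mulrA (Eh n).2 mul0r.
Qed.

Lemma idempotent_direct_summand (I : R -> Prop) E : right_ideal I ->
  E * E = E -> I E -> (forall x, I x -> E * x = x) -> direct_summand I.
Proof.
move=> [_ [_ IM]] EE IE IE_id; exists (fun x => E * x = 0); split.
  split; first by rewrite mulr0.
  split; first by move=> x y hx hy; rewrite mulrBr hx hy subrr.
  by move=> x r hx; rewrite mulrA hx mul0r.
split; first by move=> x Ix <-; rewrite IE_id.
move=> r; exists (E * r), (r - E * r); split; first exact: IM.
by split; [rewrite mulrBr mulrA EE subrr | rewrite addrC subrK].
Qed.

Section VonNeumannRegular.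
Hypothesis vN : vN_regular R.

(* With [x' u x' = x'] for [x' = x - E x != 0], the idempotent [H0 = x' u]
   satisfies [E H0 = 0], and [H0 - H0 E] is orthogonal to [E] on both sides. *)
Lemma exists_orthogonal_idempotent (I : R -> Prop) E :
  right_ideal I -> ~ direct_summand I -> E * E = E -> I E ->
  exists H, [/\ H * H = H, H != 0, E * H = 0, H * E = 0 & I H].
Proof.
move=> hI nJ EE IE; have [_ [IB IM]] := hI.
have [x [Ix Ex]] : exists x, I x /\ E * x != x.
  apply: contrapT => nx; apply/nJ/(idempotent_direct_summand hI EE IE) => x Ix.
  by apply: contrapT => /eqP Ex; apply: nx; exists x.
set x' := x - E * x.
have x'nz : x' != 0 by rewrite subr_eq0 eq_sym.
have Ex' : E * x' = 0 by rewrite mulrBr mulrA EE subrr.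
have [u hu] := vN x'.
set H0 := x' * u.
have H0H0 : H0 * H0 = H0 by rewrite /H0 mulrA hu.
have EH0 : E * H0 = 0 by rewrite /H0 mulrA Ex' mul0r.
have H0nz : H0 != 0.
  by apply: contraNneq x'nz => e; rewrite -hu -/H0 e mul0r.
have IH0 : I H0 by apply: (IM); apply: (IB) => //; apply: (IM).
clearbody H0.
exists (H0 - H0 * E); split.
- rewrite mulrBl !mulrBr !mulrA H0H0 -[H0 * E * H0]mulrA EH0 mulr0 mul0r.
  by rewrite subrr subr0.
- apply: contraNneq H0nz => e.
  have : (H0 - H0 * E) * H0 = H0 by rewrite mulrBl H0H0 -mulrA EH0 mulr0 subr0.
  by rewrite e mul0r => <-.
- by rewrite mulrBr EH0 mulrA EH0 mul0r subrr.
- by rewrite mulrBl -mulrA EE subrr.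
- by apply: IB => //; apply: IM.
Qed.

Lemma not_completely_reducible_orthogonal_idempotents :
  ~ completely_reducible R ->
  exists h, orthogonal_idempotents h /\ forall n, h n != 0.
Proof.
move=> ncr.
have [I hI nJ] : exists2 I, right_ideal I & ~ direct_summand I.
  apply: contrapT => nI; apply: ncr => I hI.
  by apply: contrapT => nJ; apply: nI; exists I.
have /choice[H HP] : forall E, exists H, E * E = E -> I E ->
    [/\ H * H = H, H != 0, E * H = 0, H * E = 0 & I H].
  move=> E; case: (EM (E * E = E /\ I E)) => [[EE IE]|nE]; last first.
    by exists 0 => EE IE; case: nE.
  have [H' hH'] := exists_orthogonal_idempotent hI nJ EE IE.
  by exists H'.
pose E := fix E n := if n is n'.+1 then E n' + H (E n') else 0.
have Einv n : E n * E n = E n /\ I (E n).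
  elim: n => [|n [EE IE]] /=; first by rewrite mulr0; split => //; case: hI.
  have [HH _ EH HE IH] := HP _ EE IE.
  split; last exact: right_idealD.
  by rewrite mulrDl !mulrDr EE EH HE HH addr0 add0r.
have hP n := HP _ (Einv n).1 (Einv n).2.
exists (fun n => H (E n)); split; last by move=> n; have [] := hP n.
by apply: (@orthogonal_increments E) => // n; case: (hP n).
Qed.

Lemma essential_lann_eq0 (E : R -> Prop) z :
  essential E -> (forall e, E e -> z * e = 0) -> z = 0.
Proof.
move=> essE zE; apply: contrapT => /eqP znz.
have [u hu] := vN z.
have uznz : u * z != 0 by apply: contraNneq znz => e; rewrite -hu -mulrA e mulr0.
have [r [nz Er]] := essE _ uznz.
have zr : z * r = 0 by rewrite -hu -!mulrA [u * (z * r)]mulrA zE.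
by move: nz; rewrite -mulrA zr mulr0 eqxx.
Qed.

End VonNeumannRegular.

Definition disjoint_ideal (D W : R -> Prop) : Prop :=
  [/\ forall x y, W x -> W y -> W (x - y), forall x r, W x -> W (x * r) &
      forall x, W x -> D x -> x = 0].

Lemma exists_maximal_disjoint_ideal (D : R -> Prop) : exists A,
  disjoint_ideal D A /\ forall A', (forall x, A x -> A' x) ->
    disjoint_ideal D A' -> forall x, A' x -> A x.
Proof.
have [|A [DA Amax]] := @classical_sets.Zorn_bigcup R (disjoint_ideal D).
  move=> F FP Ftot; split.
  - move=> x y [X FX Xx] [Y FY Yy].
    have [XY|YX] := Ftot X Y FX FY.
      by exists Y => //; have [PB _ _] := FP Y FY; apply: PB => //; apply: XY.
    by exists X => //; have [PB _ _] := FP X FX; apply: PB => //; apply: YX.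
  - by move=> x r [X FX Xx]; exists X => //; have [_ PM _] := FP X FX; apply: PM.
  - by move=> x [X FX Xx]; have [_ _ PD] := FP X FX; apply: PD.
exists A; split => // A' AA' DA' x A'x; apply: contrapT => nAx.
by apply: (Amax A') => //; split => // /(_ x A'x).
Qed.

Lemma exists_essential_complement (D : R -> Prop) : D 0 ->
  exists W, [/\ right_ideal W, (forall x, W x -> D x -> x = 0) &
    essential (fun x => exists d w, [/\ D d, W w & x = d + w])].
Proof.
move=> D0; have [A [[AB AM AD] Amax]] := exists_maximal_disjoint_ideal D.
have A0 : A 0.
  apply: contrapT => nA0; apply/nA0/(Amax (fun x => x = 0)) => //.
    by move=> x Ax; case: nA0; rewrite -(subrr x); apply: AB.
  by split=> [x y -> ->|x r ->|x ->]; rewrite ?subrr ?mul0r.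
exists A; split => // x xnz; apply: contrapT => nex.
have xr_DA0 r : (exists d w, [/\ D d, A w & x * r = d + w]) -> x * r = 0.
  by move=> hr; apply: contrapT => nz; apply: nex; exists r; split => //; exact/eqP.
(* [A + x R] is still disjoint from [D], so maximality puts [x] in [A]. *)
have Ax : A x.
  apply: (Amax (fun z => exists w r, A w /\ z = w + x * r)).
  - by move=> z Az; exists z, 0; rewrite mulr0 addr0.
  - split.
    + move=> z z' [w [r [Aw ->]]] [w' [r' [Aw' ->]]]; exists (w - w'), (r - r').
      by split; [exact: AB | rewrite mulrBr opprD addrACA].
    + move=> z s [w [r [Aw ->]]]; exists (w * s), (r * s); split; first exact: AM.
      by rewrite mulrDl mulrA.
    + move=> z [w [r [Aw ->]]] Dz.
      have xr0 : x * r = 0.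
        apply: xr_DA0; exists (w + x * r), (- w); split => //.
          by rewrite -sub0r; exact: AB.
        by rewrite addrC addKr.
      by rewrite xr0 addr0 in Dz *; apply: AD.
  - by exists 0, 1; rewrite add0r mulr1.
by move/eqP: xnz; apply; rewrite -[x]mulr1 xr_DA0 //; exists 0, x; rewrite add0r mulr1.
Qed.

End RightIdeals.

Section SelfInjectiveExtension.
Variables (R : nzRingType) (Phi : R -> R -> Prop).
Hypothesis Phi0 : Phi 0 0.
Hypothesis Phi_functional : forall x z z', Phi x z -> Phi x z' -> z = z'.
Hypothesis PhiB : forall x y z w, Phi x z -> Phi y w -> Phi (x - y) (z - w).
Hypothesis PhiMr : forall x z r, Phi x z -> Phi (x * r) (z * r).

Lemma PhiD x y z w : Phi x z -> Phi y w -> Phi (x + y) (z + w).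
Proof.
move=> hx hy; have := PhiB hx (PhiB Phi0 hy).
by rewrite !sub0r !opprK.
Qed.

Definition graph_dom (x : (R^c)^o) : bool := `[< exists z, Phi x z >].

Lemma graph_dom_submod_closed : submod_closed graph_dom.
Proof.
split; first by apply/asboolP; exists 0.
move=> a u v /asboolP[z hz] /asboolP[w hw]; apply/asboolP.
by exists (z * a + w); exact: PhiD (PhiMr a hz) hw.
Qed.

HB.instance Definition _ :=
  GRing.isSubmodClosed.Build R^c (R^c)^o graph_dom graph_dom_submod_closed.

Inductive graph_sub : predArgType := GraphSub x & graph_dom x.
Definition graph_val (m : graph_sub) : (R^c)^o := let: GraphSub x _ := m in x.
HB.instance Definition _ := [isSub for graph_val].
HB.instance Definition _ := [Choice of graph_sub by <:].
HB.instance Definition _ := [SubChoice_isSubZmodule of graph_sub by <:].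
HB.instance Definition _ := [SubZmodule_isSubLmodule of graph_sub by <:].

Lemma graph_val_is_linear : linear graph_val. Proof. by []. Qed.
HB.instance Definition _ :=
  GRing.isLinear.Build R^c graph_sub (R^c)^o _ graph_val graph_val_is_linear.

Definition graph_fun (x : R) : R :=
  if pselect (exists z, Phi x z) is left h then projT1 (cid h) else 0.

Lemma graph_funE x z : Phi x z -> graph_fun x = z.
Proof.
move=> h; rewrite /graph_fun; case: pselect => [h'|[]]; last by exists z.
by case: cid => /= z' hz'; apply: Phi_functional hz' h.
Qed.

Lemma graph_funP x : graph_dom x -> Phi x (graph_fun x).
Proof. by move/asboolP=> [z hz]; rewrite (graph_funE hz). Qed.

Definition graph_map (m : graph_sub) : (R^c)^o := graph_fun (graph_val m).

Lemma graph_map_is_linear : linear graph_map.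
Proof.
move=> a u v; apply: graph_funE.
exact: PhiD (PhiMr a (graph_funP (valP u))) (graph_funP (valP v)).
Qed.
HB.instance Definition _ :=
  GRing.isLinear.Build R^c graph_sub (R^c)^o _ graph_map graph_map_is_linear.

(* Extend [graph_map] along the inclusion [graph_val] into [R_R]; the
   extension is left multiplication by the image of [1]. *)
Lemma self_injective_graph_mul : right_self_injective R ->
  exists y, forall x z, Phi x z -> z = y * x.
Proof.
move=> inj; have [h hh] := inj _ _ graph_val (@val_inj _ _ graph_sub) graph_map.
exists (h 1) => x z hxz.
have dx : graph_dom x by apply/asboolP; exists z.
rewrite -(graph_funE hxz) -[graph_fun x]/(graph_map (GraphSub dx)) -hh /=.
have := linearZZ h x (1 : (R^c)^o).
set x1 := (X in h X = _).
by have -> : x1 = x by rewrite /x1 /GRing.scale /= mulr1.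
Qed.

End SelfInjectiveExtension.

Section OrthogonalSums.
Variable R : nzRingType.

Definition in_orthogonal_sum (e : nat -> R) (x : R) : Prop :=
  exists N, (\sum_(j < N) e j) * x = x.

Lemma suml_mul_orthogonal (f g c : nat -> R) :
  (forall i j, f i * g j = if i == j then c i else 0) ->
  forall M j, (\sum_(i < M) f i) * g j = if (j < M)%N then c j else 0.
Proof.
move=> fg M j; rewrite mulr_suml.
under eq_bigr do rewrite fg.
by rewrite -big_mkcond big_ord1_eq.
Qed.

Lemma sum_mul_orthogonal (f g c : nat -> R) :
  (forall i j, f i * g j = if i == j then c i else 0) ->
  forall N M, (N <= M)%N ->
  (\sum_(i < M) f i) * (\sum_(j < N) g j) = \sum_(j < N) c j.
Proof.
move=> fg N M NM; rewrite mulr_sumr; apply: eq_bigr => j _.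
by rewrite (suml_mul_orthogonal fg) (leq_trans (ltn_ord j) NM).
Qed.

Section Extension.
Hypothesis inj : right_self_injective R.
Variables (e t : nat -> R) (W : R -> Prop).
Hypothesis e_orth : orthogonal_idempotents e.
Hypothesis t_e : forall j, t j * e j = t j.
Hypothesis W_ideal : right_ideal W.
Hypothesis W_sum : forall x, W x -> in_orthogonal_sum e x -> x = 0.

Local Notation sum_e N := (\sum_(j < N) e j).
Local Notation sum_t N := (\sum_(j < N) t j).

Lemma t_e_orthogonal i j : t i * e j = if i == j then t i else 0.
Proof. by rewrite -t_e -mulrA e_orth; case: eqP => [->|]; rewrite ?t_e ?mulr0. Qed.

Lemma orthogonal_sum_stable N M x : sum_e N * x = x -> (N <= M)%N ->
  sum_e M * x = x /\ sum_t M * x = sum_t N * x.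
Proof.
move=> ex NM; split; rewrite -[in LHS]ex mulrA.
  by rewrite (sum_mul_orthogonal e_orth).
by rewrite (sum_mul_orthogonal t_e_orthogonal).
Qed.

(* The right ideal [D + W], with [D] the sum of the [e j R], carries the
   well-defined map [d + w |-> (sum_(j < N) t j) d], with [N] large enough. *)
Lemma extend_orthogonal_sum :
  exists y, (forall j, y * e j = t j) /\ (forall w, W w -> y * w = 0).
Proof.
have [W0 [WB WM]] := W_ideal.
pose Phi x z := exists d w N,
  [/\ sum_e N * d = d, W w, x = d + w & z = sum_t N * d].
have [y hy] : exists y, forall x z, Phi x z -> z = y * x.
  apply: self_injective_graph_mul inj.
  - by exists 0, 0, 0%N; rewrite !mulr0 addr0.
  - move=> x z z' [d [w [N [Ed Ww -> ->]]]] [d' [w' [N' [Ed' Ww' e' ->]]]].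
    have [E1 T1] := orthogonal_sum_stable Ed (leq_maxl N N').
    have [E2 T2] := orthogonal_sum_stable Ed' (leq_maxr N N').
    have /eqP : d - d' = 0.
      apply: W_sum; last by exists (maxn N N'); rewrite mulrBr E1 E2.
      have -> : d - d' = w' - w by rewrite -[d](addrK w) e' addrAC [d' + w']addrC addrK.
      exact: WB.
    by rewrite subr_eq0 -T1 -T2 => /eqP ->.
  - move=> x x' z z' [d [w [N [Ed Ww -> ->]]]] [d' [w' [N' [Ed' Ww' -> ->]]]].
    have [E1 T1] := orthogonal_sum_stable Ed (leq_maxl N N').
    have [E2 T2] := orthogonal_sum_stable Ed' (leq_maxr N N').
    exists (d - d'), (w - w'), (maxn N N'); split.
    + by rewrite mulrBr E1 E2.
    + exact: WB.
    + by rewrite opprD addrACA.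
    + by rewrite mulrBr T1 T2.
  - move=> x z r [d [w [N [Ed Ww -> ->]]]]; exists (d * r), (w * r), N.
    by split; rewrite ?mulrA ?Ed ?mulrDl //; exact: WM.
exists y; split => [j|w Ww].
  rewrite -[e j]addr0 -(hy _ (t j)) //; exists (e j), 0, j.+1.
  by rewrite (suml_mul_orthogonal e_orth) (suml_mul_orthogonal t_e_orthogonal) !ltnSn.
rewrite -[w]add0r -(hy _ 0) //; exists 0, w, 0%N.
by rewrite !mulr0.
Qed.

End Extension.
End OrthogonalSums.

(* [a i] extends the projection of [D + W] onto the [i]-th block, where [D]
   is the sum of the [h j R] and [W] an essential complement of [D]; the [a i]
   are orthogonal on [D + W], hence everywhere by nonsingularity. *)
Lemma block_orthogonal_idempotents (R : nzRingType) (h : nat -> R)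
    (col : nat -> nat) :
  vN_regular R -> right_self_injective R -> orthogonal_idempotents h ->
  exists a : nat -> R, orthogonal_idempotents a /\
    forall i j, a i * h j = if col j == i then h j else 0.
Proof.
move=> vN inj h_orth.
have [W [W_ideal W_sum essW]] : exists W, [/\ right_ideal W,
    forall x, W x -> in_orthogonal_sum h x -> x = 0 &
    essential (fun x => exists d w, [/\ in_orthogonal_sum h d, W w & x = d + w])].
  by apply: exists_essential_complement; exists 0%N; rewrite mulr0.
pose block i j := if col j == i then h j else 0.
have /choice[a ha] : forall i, exists y,
    (forall j, y * h j = block i j) /\ (forall w, W w -> y * w = 0).
  move=> i; apply: extend_orthogonal_sum => // j.
  by rewrite /block; case: ifP; rewrite ?mul0r // h_orth eqxx.
exists a; split => [l i|]; last by move=> i j; rewrite (ha i).1.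
apply/eqP; rewrite -subr_eq0; apply/eqP; apply: (essential_lann_eq0 vN essW).
move=> _ [d [w [[N Nd] Ww ->]]].
have a_block l' i' j : a l' * block i' j = if l' == i' then block i' j else 0.
  rewrite /block; case: (col j =P i') => [<-|_]; last by rewrite mulr0; case: ifP.
  by rewrite (ha l').1 /block eq_sym.
have hj0 j : (a l * a i - (if l == i then a l else 0)) * h j = 0.
  rewrite mulrBl -mulrA (ha i).1 a_block.
  by case: eqP => [->|]; rewrite ?(ha i).1 ?mul0r subrr.
rewrite mulrDr -Nd mulrA mulr_sumr big1 ?mul0r ?add0r => [|j _]; last exact: hj0.
by rewrite mulrBl -mulrA (ha i).2 // mulr0; case: eqP => _; rewrite ?(ha l).2 ?mul0r ?subrr.
Qed.

Section Span.
Variables (K : fieldType) (R : algType K).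

Fixpoint in_span (vs : seq R) (z : R) : Prop :=
  if vs is v :: vs' then exists a z', in_span vs' z' /\ z = a *: v + z' else z = 0.

Fixpoint independent (vs : seq R) : Prop :=
  if vs is v :: vs' then ~ in_span vs' v /\ independent vs' else True.

Lemma in_spanD vs x y : in_span vs x -> in_span vs y -> in_span vs (x + y).
Proof.
elim: vs x y => [|v vs IH] x y /=; first by move=> -> ->; rewrite addr0.
move=> [a [x' [hx ->]]] [b [y' [hy ->]]]; exists (a + b), (x' + y').
by split; [exact: IH | rewrite scalerDl addrACA].
Qed.

Lemma in_spanZ vs c x : in_span vs x -> in_span vs (c *: x).
Proof.
elim: vs x => [|v vs IH] x /=; first by move=> ->; rewrite scaler0.
move=> [a [x' [hx ->]]]; exists (c * a), (c *: x').
by split; [exact: IH | rewrite scalerDr scalerA].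
Qed.

Lemma in_spanB vs x y : in_span vs x -> in_span vs y -> in_span vs (x - y).
Proof. by move=> hx hy; apply: in_spanD => //; rewrite -scaleN1r; apply: in_spanZ. Qed.

Lemma in_span_mulr0 vs z w : in_span vs z ->
  (forall v, v \in vs -> v * w = 0) -> z * w = 0.
Proof.
elim: vs z => [|v vs IH] z /=; first by move=> ->; rewrite mul0r.
move=> [a [z' [hz ->]]] vw0; rewrite mulrDl -scalerAl (vw0 v (mem_head _ _)) scaler0.
by rewrite add0r IH // => u uvs; apply: vw0; rewrite in_cons uvs orbT.
Qed.

Lemma in_span_mulr_id vs z w : in_span vs z ->
  (forall v, v \in vs -> v * w = v) -> z * w = z.
Proof.
elim: vs z => [|v vs IH] z /=; first by move=> ->; rewrite mul0r.
move=> [a [z' [hz ->]]] vw; rewrite mulrDl -scalerAl (vw v (mem_head _ _)).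
by rewrite IH // => u uvs; apply: vw; rewrite in_cons uvs orbT.
Qed.

Lemma independent_dual (I : eqType) (f g : I -> R) (js : seq I) : uniq js ->
  (forall i j, i \in js -> j \in js -> i != j -> f i * g j = 0) ->
  (forall j, j \in js -> f j * g j != 0) -> independent [seq f j | j <- js].
Proof.
elim: js => [|j js IH] //= /andP[jjs ujs] fg0 fg; split; last first.
  apply: IH => // [i l ijs ljs|l ljs]; last by apply: fg; rewrite in_cons ljs orbT.
  by apply: fg0; rewrite in_cons ?ijs ?ljs orbT.
move=> /in_span_mulr0 fj0; move: (fg j (mem_head _ _)); rewrite fj0 ?eqxx //.
move=> _ /mapP[i ijs ->]; apply: fg0; rewrite ?in_cons ?ijs ?eqxx ?orbT //.
by apply: contraNneq jjs => <-.
Qed.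

End Span.

Section Coordinates.
Variables (K : fieldType) (R : algType K) (B : R -> Prop).
Hypothesis B_basis : is_basis B.
Implicit Types (t : seq (K * R)) (r x y : R).

Definition combo t : R := \sum_(p <- t) p.1 *: p.2.
Definition coef t (b : R) : K := \sum_(p <- t | p.2 == b) p.1.
Definition over_basis t : Prop := forall p, p \in t -> B p.2.
Definition scale_combo (c : K) t := [seq (c * p.1, p.2) | p <- t].

Lemma combo_cat t1 t2 : combo (t1 ++ t2) = combo t1 + combo t2.
Proof. by rewrite /combo big_cat. Qed.

Lemma coef_cat t1 t2 b : coef (t1 ++ t2) b = coef t1 b + coef t2 b.
Proof. by rewrite /coef big_cat. Qed.

Lemma over_basis_cat t1 t2 : over_basis t1 -> over_basis t2 -> over_basis (t1 ++ t2).
Proof. by move=> h1 h2 p; rewrite mem_cat => /orP[/h1|/h2]. Qed.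

Lemma combo_scale c t : combo (scale_combo c t) = c *: combo t.
Proof. by rewrite /combo big_map scaler_sumr; apply: eq_bigr => p _; rewrite scalerA. Qed.

Lemma coef_scale c t b : coef (scale_combo c t) b = c * coef t b.
Proof. by rewrite /coef big_map mulr_sumr. Qed.

Lemma over_basis_scale c t : over_basis t -> over_basis (scale_combo c t).
Proof. by move=> h p /mapP[q qt ->]; exact: h q qt. Qed.

Lemma coef_notin t b : b \notin [seq p.2 | p <- t] -> coef t b = 0.
Proof.
move=> bt; rewrite /coef big_seq_cond big1 // => p /andP[pt /eqP pb].
by case/negP: bt; rewrite -pb; apply: map_f.
Qed.

Lemma sum_coef U t : uniq U -> {subset [seq p.2 | p <- t] <= U} ->
  \sum_(u <- U) coef t u *: u = combo t.
Proof.
move=> uU tU; rewrite /combo /coef; under eq_bigr do rewrite scaler_suml.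
rewrite (exchange_big_dep xpredT) //=; apply: eq_big_seq => p pt.
rewrite big_mkcond (bigD1_seq p.2) ?tU ?map_f //= eqxx big1 ?addr0 // => u.
by rewrite eq_sym => /negbTE ->.
Qed.

Lemma coef_unique t1 t2 : over_basis t1 -> over_basis t2 ->
  combo t1 = combo t2 -> coef t1 =1 coef t2.
Proof.
move=> h1 h2 e b; set U := undup [seq p.2 | p <- t1 ++ t2].
have uU : uniq U := undup_uniq _.
have s1 : {subset [seq p.2 | p <- t1] <= U}.
  by move=> x hx; rewrite mem_undup map_cat mem_cat hx.
have s2 : {subset [seq p.2 | p <- t2] <= U}.
  by move=> x hx; rewrite mem_undup map_cat mem_cat hx orbT.
have UB u : u \in U -> B u.
  by rewrite mem_undup => /mapP[p pt ->]; exact: over_basis_cat h1 h2 p pt.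
have sum0 : \sum_(u <- U) (coef t1 u - coef t2 u) *: u = 0.
  under eq_bigr do rewrite scalerBl.
  by rewrite sumrB (sum_coef uU s1) (sum_coef uU s2) e subrr.
have [bU|bU] := boolP (b \in U).
  by apply/eqP; rewrite -subr_eq0; apply/eqP/(B_basis.1 _ _ uU UB sum0).
by rewrite !coef_notin //; apply: contra bU; [exact: s2 | exact: s1].
Qed.

Lemma exists_combo r : exists t, over_basis t /\ r = combo t.
Proof.
have [s [c [sB ->]]] := B_basis.2 r.
exists [seq (c b, b) | b <- s]; split; last by rewrite /combo big_map.
by move=> p /mapP[b bs ->]; apply: sB.
Qed.

Definition rep r : seq (K * R) := projT1 (cid (exists_combo r)).

Lemma repP r : over_basis (rep r) /\ r = combo (rep r).
Proof. exact: projT2 (cid (exists_combo r)). Qed.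

Definition coord r (b : R) : K := coef (rep r) b.

Lemma coord_combo t : over_basis t -> coord (combo t) =1 coef t.
Proof. by move=> ht; have [h e] := repP (combo t); apply: coef_unique. Qed.

Lemma coordD x y b : coord (x + y) b = coord x b + coord y b.
Proof.
have [hx ex] := repP x; have [hy ey] := repP y.
by rewrite {1}ex {1}ey -combo_cat coord_combo ?coef_cat //; exact: over_basis_cat.
Qed.

Lemma coordZ c x b : coord (c *: x) b = c * coord x b.
Proof.
have [hx ex] := repP x.
by rewrite {1}ex -combo_scale coord_combo ?coef_scale //; exact: over_basis_scale.
Qed.

Lemma coordB x y b : coord (x - y) b = coord x b - coord y b.
Proof. by rewrite coordD -scaleN1r coordZ mulN1r. Qed.

Definition supp r : seq R :=
  [seq b <- undup [seq p.2 | p <- rep r] | coord r b != 0].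

Definition cs r : nat := size (supp r).

Lemma supp_uniq r : uniq (supp r).
Proof. exact/filter_uniq/undup_uniq. Qed.

Lemma mem_supp r b : (b \in supp r) = (coord r b != 0).
Proof.
rewrite mem_filter; have [nz|] //= := boolP (coord r b != 0).
rewrite mem_undup; apply: contraNT nz => /coef_notin.
by rewrite /coord => ->; rewrite eqxx.
Qed.

Lemma supp_basis r b : b \in supp r -> B b.
Proof.
by rewrite mem_filter mem_undup => /andP[_ /mapP[p pt ->]]; exact: (repP r).1.
Qed.

Lemma supp_combo r : r = \sum_(b <- supp r) coord r b *: b.
Proof.
have [h e] := repP r.
rewrite {1}e -(@sum_coef (undup [seq p.2 | p <- rep r])) ?undup_uniq //; last first.
  by move=> x; rewrite mem_undup.
rewrite /supp big_filter [in RHS]big_mkcond; apply: eq_bigr => u _.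
by case: ifP => // /negbFE/eqP; rewrite /coord => ->; rewrite scale0r.
Qed.

Lemma supp_of_supp r : supp_of B r (supp r).
Proof.
split; first exact: supp_uniq.
split; first by move=> b; apply: supp_basis.
by exists (coord r); split; [move=> b; rewrite mem_supp | exact: supp_combo].
Qed.

Lemma coord_neq0 r : r != 0 -> exists b, coord r b != 0.
Proof.
move=> nz; case e: (supp r) => [|b s].
  by move: nz; rewrite {1}(supp_combo r) e big_nil eqxx.
by exists b; rewrite -mem_supp e mem_head.
Qed.

Definition short_combo (n : nat) x : Prop :=
  exists t, [/\ over_basis t, (size t <= n)%N & x = combo t].

Lemma cs_short n x : short_combo n x -> (cs x <= n)%N.
Proof.
move=> [t [ht st ->]]; apply: leq_trans st; rewrite -(size_map snd).
apply: uniq_leq_size; first exact: supp_uniq.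
move=> b; rewrite mem_supp coord_combo //; apply: contraR => /coef_notin ->.
by rewrite eqxx.
Qed.

Lemma short_cs x : short_combo (cs x) x.
Proof.
exists [seq (coord x b, b) | b <- supp x]; rewrite size_map; split => //.
  by move=> p /mapP[b bs ->]; exact: supp_basis bs.
by rewrite /combo big_map -supp_combo.
Qed.

Lemma short_comboW n m x : (n <= m)%N -> short_combo n x -> short_combo m x.
Proof. by move=> nm [t [h s e]]; exists t; split => //; apply: leq_trans nm. Qed.

Lemma short_comboD n m x y :
  short_combo n x -> short_combo m y -> short_combo (n + m) (x + y).
Proof.
move=> [t1 [h1 s1 ->]] [t2 [h2 s2 ->]]; exists (t1 ++ t2).
by rewrite size_cat leq_add // combo_cat; split => //; exact: over_basis_cat.
Qed.

Lemma short_comboZ n c x : short_combo n x -> short_combo n (c *: x).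
Proof.
move=> [t [h s ->]]; exists (scale_combo c t).
by rewrite size_map combo_scale; split => //; exact: over_basis_scale.
Qed.

Lemma short_combo_sum (I : eqType) (s : seq I) (F : I -> R) n :
  (forall i, i \in s -> short_combo n (F i)) ->
  short_combo (size s * n) (\sum_(i <- s) F i).
Proof.
elim: s => [|i s IH] sF; first by rewrite big_nil; exists [::]; rewrite /combo big_nil.
rewrite big_cons mulSn; apply: short_comboD; first by apply: sF; rewrite mem_head.
by apply: IH => j js; apply: sF; rewrite in_cons js orbT.
Qed.

Lemma cs_mul k : k_bounded B k -> forall x y, (cs (x * y) <= cs x * (cs y * k))%N.
Proof.
move=> [_ Bk] x y; apply: cs_short.
have -> : x * y = \sum_(a <- supp x) \sum_(b <- supp y)
    (coord x a * coord y b) *: (a * b).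
  rewrite {1}(supp_combo x) {1}(supp_combo y) mulr_suml.
  apply: eq_bigr => a _; rewrite mulr_sumr; apply: eq_bigr => b _.
  by rewrite -scalerAl -scalerAr scalerA.
apply: short_combo_sum => a xa; apply: short_combo_sum => b yb; apply: short_comboZ.
apply: short_comboW (short_cs _).
exact: Bk (supp_basis xa) (supp_basis yb) _ (supp_of_supp _).
Qed.

(* Gaussian elimination: each new vector contributes one pivot coordinate. *)
Lemma coord_span_surjective vs : independent vs -> exists ps : seq R,
  [/\ uniq ps, size ps = size vs &
      forall tau : R -> K, exists z, in_span vs z /\ {in ps, coord z =1 tau}].
Proof.
elim: vs => [|v vs IH] /=.
  by move=> _; exists [::]; split => // tau; exists 0.
move=> [vvs /IH [ps [ups sps surj]]].
have [z0 [hz0 ez0]] := surj (coord v).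
set u := v - z0.
have unz : u != 0 by apply/eqP => /eqP; rewrite subr_eq0 => /eqP vz0; rewrite vz0 in vvs.
have [q hq] := coord_neq0 unz.
have u_ps p : p \in ps -> coord u p = 0 by move=> pps; rewrite coordB ez0 // subrr.
have qps : q \notin ps by apply: contra hq => /u_ps ->.
exists (q :: ps); split; rewrite /= ?qps ?sps // => tau.
have [z1 [hz1 ez1]] := surj tau.
set l := (tau q - coord z1 q) / coord u q.
exists (l *: u + z1); split.
  exists l, (z1 - l *: z0); split; first by apply: in_spanB => //; apply: in_spanZ.
  by rewrite /u scalerBr [z1 - _]addrC addrA.
move=> p; rewrite in_cons => /orP[/eqP ->|pps].
  by rewrite coordD coordZ /l divfK // addrNK.
by rewrite coordD coordZ u_ps // mulr0 add0r ez1.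
Qed.

Lemma independent_large_cs vs : independent vs ->
  exists z, in_span vs z /\ (size vs <= cs z)%N.
Proof.
move=> /coord_span_surjective [ps [ups sps surj]].
have [z [hz ez]] := surj (fun _ => 1).
exists z; split => //; rewrite -sps; apply: uniq_leq_size => // p pps.
by rewrite mem_supp ez // oner_neq0.
Qed.

End Coordinates.

Section BoundedBasis.
Variables (K : fieldType) (R : algType K) (B : R -> Prop) (k : nat).
Hypotheses (vN : vN_regular R) (inj : right_self_injective R).
Hypotheses (B_basis : is_basis B) (B_bounded : k_bounded B k).

Definition block_of (j : nat) : nat :=
  if @unpickle (nat * nat)%type j is Some (i, _) then i else 0.

Lemma block_of_pickle (i l : nat) : block_of (pickle (i, l)) = i.
Proof. by rewrite /block_of pickleK. Qed.

Lemma block_large_cs (h a : nat -> R) :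
  orthogonal_idempotents h -> (forall n, h n != 0) -> orthogonal_idempotents a ->
  (forall i j, a i * h j = if block_of j == i then h j else 0) ->
  forall i n, exists z, z * a i = z /\ (n <= cs B_basis z)%N.
Proof.
move=> h_orth h_nz a_orth a_h i n.
pose js := [seq pickle (i, l) | l <- iota 0 n].
have js_block j : j \in js -> block_of j = i.
  by move=> /mapP[l _ ->]; exact: block_of_pickle.
have indep : independent [seq h j * a i | j <- js].
  apply: (@independent_dual _ _ _ _ h).
  - by rewrite map_inj_uniq ?iota_uniq // => l l' /(pcan_inj pickleK) [].
  - by move=> j l _ /js_block lji jl; rewrite -mulrA a_h lji eqxx h_orth (negbTE jl).
  - by move=> j /js_block jji; rewrite -mulrA a_h jji eqxx h_orth eqxx.
have [z [zspan zcs]] := independent_large_cs B_basis indep.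
exists z; split; last by rewrite !size_map size_iota in zcs.
by apply: in_span_mulr_id zspan _ => _ /mapP[j _ ->]; rewrite -mulrA a_orth eqxx.
Qed.

Lemma no_infinite_orthogonal_idempotents (h : nat -> R) :
  orthogonal_idempotents h -> (forall n, h n != 0) -> False.
Proof.
move=> h_orth h_nz.
have [a [a_orth a_h]] := block_orthogonal_idempotents block_of vN inj h_orth.
have /choice[z hz] : forall i, exists z,
    z * a i = z /\ (k * i * cs B_basis (a i) < cs B_basis z)%N.
  by move=> i; exact: block_large_cs.
have zero_ideal : right_ideal (fun w : R => w = 0).
  by split=> //; split=> [x w -> ->|x r ->]; rewrite ?subrr ?mul0r.
have [y [ya _]] := extend_orthogonal_sum inj a_orth (fun i => (hz i).1) zero_ideal
  (fun x x0 _ => x0).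
have := cs_mul B_basis B_bounded y (a (cs B_basis y)); rewrite ya.
have := (hz (cs B_basis y)).2; lia.
Qed.

End BoundedBasis.

Theorem lemma5p4 (K : fieldType) (R : algType K) :
  vN_regular R -> right_self_injective R ->
  (exists B : R -> Prop, bounded_basis B) ->
  completely_reducible R.
Proof.
move=> vN inj [B [B_basis [k B_bounded]]]; apply: contrapT => not_cr.
have [h [h_orth h_nz]] := not_completely_reducible_orthogonal_idempotents vN not_cr.
exact: (no_infinite_orthogonal_idempotents vN inj B_basis B_bounded h_orth h_nz).
Qed.
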